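(* Let $l\ge1$ and let $A$ be a real $l\times l$ matrix. If $\det(I+\overline IA)\ge0$ for every $l\times l$ diagonal matrix $\overline I$ whose diagonal entries are each $1$ or $-1$, then $|\det A|\le1$.
   Context: $I$ denotes the $l\times l$ identity matrix. *)

From mathcomp Require Import all_boot all_order all_algebra.
From mathcomp Require Import reals.
Set Implicit Arguments. Unset Strict Implicit. Unset Printing Implicit Defensive.
Import Order.TTheory GRing.Theory Num.Theory.
Local Open Scope ring_scope.

(* A sign vector: every entry is 1 or -1. diag_mx s is then a diagonal
   matrix with diagonal entries in {1,-1}. *)
Definition sign_vec (R : nzRingType) (l : nat) (s : 'rV[R]_l) : Prop :=
  forall j : 'I_l, s 0 j = 1 \/ s 0 j = -1.

From mathcomp Require Import all_boot all_order all_algebra.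
From mathcomp Require Import reals.
From mathcomp Require Import perm ring.
Import Order.TTheory GRing.Theory Num.Theory.
Local Open Scope ring_scope.

(* Row i of [I + diag(s) A] is [e_i + s_i A_i].  Expanding the determinant by
   multilinearity over the two row choices [e_i + A_i], [e_i - A_i] shows that
   the sum of [det (I + diag(s) A)] over all sign vectors [s] is [det (2 I)],
   while the same sum weighted by [s_1 ... s_l] is [det (2 A)].  With all terms
   nonnegative, the triangle inequality gives [2^l |det A| <= 2^l]. *)

Lemma det_mx_sum_rows (R : comPzRingType) (T : finType) n
    (c : 'I_n -> T -> R) (f : 'I_n -> T -> 'I_n -> R) :
  \det (\matrix_(i, j) \sum_(t : T) c i t * f i t j)
  = \sum_(d : {ffun 'I_n -> T}) (\prod_i c i (d i)) * \det (\matrix_(i, j) f i (d i) j).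
Proof.
rewrite /determinant.
under [RHS]eq_bigr => d _ do rewrite big_distrr /=.
rewrite [RHS]exchange_big /=; apply: eq_bigr => s _.
transitivity ((-1) ^+ odd_perm s *
    \sum_(d : {ffun 'I_n -> T}) \prod_i (c i (d i) * f i (d i) (s i))).
  congr (_ * _); rewrite -(bigA_distr_bigA (fun i t => c i t * f i t (s i))).
  by apply: eq_bigr => i _; rewrite mxE.
rewrite big_distrr; apply: eq_bigr => d _; rewrite mulrCA big_split /=.
by congr (_ * (_ * _)); apply: eq_bigr => i _; rewrite mxE.
Qed.

Section SignPerturbation.

Context {R : comPzRingType} {n : nat} (A : 'M[R]_n).

Definition sign_row (d : {ffun 'I_n -> bool}) : 'rV[R]_n := \row_j (-1) ^+ d j.

Definition signed_det (d : {ffun 'I_n -> bool}) : R :=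
  \det (1%:M + diag_mx (sign_row d) *m A).

Let perturbed_entry (i : 'I_n) (b : bool) (j : 'I_n) : R :=
  (i == j)%:R + (-1) ^+ b * A i j.

Let signed_detE d : signed_det d = \det (\matrix_(i, j) perturbed_entry i (d i) j).
Proof.
rewrite /signed_det mul_diag_mx; congr (\det _); apply/matrixP => i j.
by rewrite !mxE /perturbed_entry eq_sym.
Qed.

Lemma sum_signed_det : \sum_d signed_det d = 2 ^+ n.
Proof.
have -> : (2 : R) ^+ n = \det (\matrix_(i, j) \sum_(b : bool) 1 * perturbed_entry i b j).
  have -> : \matrix_(i, j) \sum_(b : bool) 1 * perturbed_entry i b j = (2 : R) *: 1%:M.
    apply/matrixP => i j; rewrite !mxE big_bool /perturbed_entry eq_sym /=.
    by case: (i == j); ring.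
  by rewrite detZ det1 mulr1.
rewrite det_mx_sum_rows; apply: eq_bigr => d _.
by rewrite big1 ?mul1r ?signed_detE.
Qed.

Lemma sum_signed_det_weighted :
  \sum_(d : {ffun 'I_n -> bool}) (\prod_i (-1) ^+ d i) * signed_det d = 2 ^+ n * \det A.
Proof.
have <- : \det (\matrix_(i, j) \sum_(b : bool) (-1) ^+ b * perturbed_entry i b j) = 2 ^+ n * \det A.
  have -> : \matrix_(i, j) \sum_(b : bool) (-1) ^+ b * perturbed_entry i b j = (2 : R) *: A.
    by apply/matrixP => i j; rewrite !mxE big_bool /perturbed_entry /=; ring.
  by rewrite detZ.
by rewrite det_mx_sum_rows; apply: eq_bigr => d _; rewrite signed_detE.
Qed.

End SignPerturbation.

Theorem corollary2p1 (R : realType) (l : nat) (hl : (1 <= l)%N)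
  (A : 'M[R]_l) :
  (forall s : 'rV[R]_l, sign_vec s -> 0 <= \det (1%:M + diag_mx s *m A)) ->
  `|\det A| <= 1.
Proof.
move=> det_ge0.
have signed_det_ge0 d : 0 <= signed_det A d.
  by apply: det_ge0 => j; rewrite mxE; case: (d j); [right | left].
have pow2_gt0 : 0 < (2 : R) ^+ l by apply: exprn_gt0.
rewrite -(ler_pM2l pow2_gt0) mulr1 -{1}(ger0_norm (ltW pow2_gt0)) -normrM.
rewrite -sum_signed_det_weighted -(sum_signed_det A).
apply: le_trans (ler_norm_sum _ _ _) _; apply: ler_sum => d _.
rewrite normrM normr_prod big1 ?mul1r ?ger0_norm // => i _.
by rewrite normrX normrN1 expr1n.
Qed.
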